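(* Let $k \ge 1$ and $k \le m < 2k$. The number of biGrassmannian permutations of $[m]$ that avoid $\operatorname{id}_k = 12\cdots k$ is $\binom{2k-m+1}{3}$.
   Context: A permutation is Grassmannian if it has at most one descent (one-line notation); it is biGrassmannian if both it and its inverse are Grassmannian. A permutation avoids $12\cdots k$ if it has no increasing subsequence of length $k$. *)

(* Permutations of [m] are elements of 'S_m (perms of 'I_m = {0,..,m-1}),
   one-line notation s(0) s(1) ... s(m-1). *)
From mathcomp Require Import all_boot all_order all_fingroup.
Set Implicit Arguments. Unset Strict Implicit. Unset Printing Implicit Defensive.

Definition descents (m : nat) (s : 'S_m) : {set 'I_m} :=
  [set i : 'I_m | [exists j : 'I_m, (val j == (val i).+1) && (s j < s i)]].

Definition grassmannian (m : nat) (s : 'S_m) : bool := #|descents s| <= 1.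

Definition biGrassmannian (m : nat) (s : 'S_m) : bool :=
  grassmannian s && grassmannian s^-1.

Definition has_incr_subseq (k m : nat) (s : 'S_m) : bool :=
  [exists f : {ffun 'I_k -> 'I_m},
    [forall i : 'I_k, forall j : 'I_k, (i < j) ==> ((f i < f j) && (s (f i) < s (f j)))]].

Definition avoids_id (k m : nat) (s : 'S_m) : bool := ~~ has_incr_subseq k s.

From mathcomp Require Import all_boot all_order all_fingroup.
From mathcomp Require Import zify.
Set Implicit Arguments. Unset Strict Implicit. Unset Printing Implicit Defensive.

(* Every inversion of a permutation s straddles a descent of s, and, read through
   s^-1, a descent of s^-1. So if s <> 1 is biGrassmannian, with descent p and
   inverse descent v, its inversions are the pairs (i, j) with i <= p < j and
   s j <= v < s i. As s increases on both sides of p, these pairs form a product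
   C x D of two adjacent intervals of positions, and s is the permutation
   exchanging the values taken on C and D; conversely these block swaps are
   biGrassmannian. An increasing subsequence cannot meet both C and D, while the
   complement of either block is increasing, so the block swap avoids 12...k iff
   both blocks have size > m - k. Counting the triples (start, |C|, |D|) gives
   binom(2k - m + 1, 3). *)

Lemma sum_nat_interval n lo hi :
  \sum_(i < n) ((lo <= i) && (i < hi)) = minn n hi - minn n lo.
Proof.
elim: n => [|n IHn]; first by rewrite big_ord0 !min0n.
by rewrite big_ord_recr /= IHn; case: (leqP lo n); case: (ltnP n hi) => /=; lia.
Qed.

Lemma card_ord_interval m lo hi : hi <= m ->
  #|[set x : 'I_m | lo <= x < hi]| = hi - lo.
Proof.
move=> le_hi_m; rewrite -sum1_card big_mkcond /=.
under eq_bigr => i _ do rewrite inE (_ : (if _ then 1 else 0) = nat_of_bool (lo <= i < hi)) //.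
by rewrite sum_nat_interval; lia.
Qed.

Lemma downclosed_ordE m (S : {set 'I_m}) :
  (forall x y : 'I_m, y <= x -> x \in S -> y \in S) -> S = [set x : 'I_m | x < #|S|].
Proof.
move=> closedS; apply/setP => x; rewrite inE; apply/idP/idP => [Sx | ltxS].
- have : [set y : 'I_m | 0 <= y < x.+1] \subset S.
    by apply/subsetP => y; rewrite inE => /andP[_ le_yx]; exact: closedS Sx.
  by move/subset_leq_card; rewrite card_ord_interval ?subn0.
- apply/negPn/negP => notSx; move: ltxS; apply/negP; rewrite -leqNgt.
  have : S \subset [set y : 'I_m | 0 <= y < x].
    apply/subsetP => y Sy; rewrite inE leq0n ltnNge; apply/negP => le_xy.
    by move/negP: notSx; apply; exact: closedS Sy.
  by move/subset_leq_card; rewrite card_ord_interval ?subn0 // ltnW.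
Qed.

Definition inversion m (s : 'S_m) (i j : 'I_m) : bool := (i < j) && (s j < s i).

Section Inversions.

Variables (m : nat) (s : 'S_m).

Lemma card_perm_below (i : 'I_m) : #|[set j | s j < s i]| = s i.
Proof.
have -> : [set j | s j < s i] = s @^-1: [set x : 'I_m | 0 <= x < s i].
  by apply/setP => j; rewrite !inE.
by rewrite card_preimset ?card_ord_interval ?subn0 //; [exact: ltnW | exact: perm_inj].
Qed.

Lemma ltn_permE (i j : 'I_m) :
  (s j < s i) = (j < i) && ~~ inversion s j i || (i < j) && inversion s i j.
Proof.
rewrite /inversion; case: (ltngtP j i) => [lt_ji | lt_ij | /val_inj eq_ji] /=.
- have ne_sij : s j != s i :> nat.
    by apply/eqP => /val_inj/perm_inj eq_ji; rewrite eq_ji ltnn in lt_ji.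
  by rewrite orbF -leqNgt ltn_neqAle ne_sij.
- by [].
- by rewrite eq_ji ltnn.
Qed.

Lemma noinversion_ltn (x y : 'I_m) : x < y -> ~~ inversion s x y -> s x < s y.
Proof. by move=> lt_xy noinv; rewrite ltn_permE lt_xy noinv. Qed.

Lemma inversion_descent (i j : 'I_m) :
  inversion s i j -> exists2 l : 'I_m, l \in descents s & i <= l < j.
Proof.
case: j => n lt_nm /andP[/= lt_in]; elim: n lt_nm lt_in => [//|n IHn] lt_n1m lt_in lt_si.
pose j' := Ordinal (ltnW lt_n1m).
have [desc_j' | le_j'j] := ltnP (s (Ordinal lt_n1m)) (s j').
  exists j'; last by rewrite /=; lia.
  by rewrite inE; apply/existsP; exists (Ordinal lt_n1m); rewrite eqxx.
have lt_j'j : s j' < s (Ordinal lt_n1m).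
  by rewrite ltn_neqAle le_j'j andbT; apply/eqP => /val_inj/perm_inj/(congr1 val) /=; lia.
have [lt_in' | lt_ni | eq_in] := ltngtP i n.
- by have [l desc_l /andP[le_il lt_ln]] := IHn _ lt_in' (ltn_trans lt_j'j lt_si); exists l; lia.
- lia.
- by move: (ltn_trans lt_j'j lt_si); rewrite (_ : j' = i) ?ltnn //; apply: val_inj.
Qed.

End Inversions.

Lemma perm_inversion_inj m (s w : 'S_m) : inversion s =2 inversion w -> s = w.
Proof.
move=> eq_inv; apply/permP => i; apply: val_inj.
rewrite /= -card_perm_below -(card_perm_below w); apply: eq_card => j.
by rewrite !inE !ltn_permE !eq_inv.
Qed.

Lemma descents_eq0 m (s : 'S_m) : descents s = set0 -> s = 1%g.
Proof.
move=> no_desc; apply: perm_inversion_inj => i j.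
have -> : inversion 1%g i j = false by rewrite /inversion !perm1; lia.
by apply/negbTE/negP => /inversion_descent[l]; rewrite no_desc inE.
Qed.

Lemma grassmannian_descent m (s : 'S_m) :
  grassmannian s -> s != 1%g -> exists p, descents s = [set p].
Proof.
rewrite /grassmannian leq_eqVlt ltnS leqn0 => /orP[/cards1P // | /eqP/cards0_eq desc0].
by rewrite (descents_eq0 desc0) eqxx.
Qed.

Lemma descent_inversion m (s : 'S_m) (p : 'I_m) :
  p \in descents s -> exists2 q : 'I_m, q = p.+1 :> nat & inversion s p q.
Proof.
rewrite inE => /existsP[q /andP[/eqP def_q lt_sqp]].
by exists q; rewrite // /inversion def_q ltnSn.
Qed.

Lemma sorted_enum_ord_set m (S : {set 'I_m}) : sorted (fun x y : 'I_m => x < y) (enum S).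
Proof.
rewrite /enum_mem -enumT; apply: sorted_filter; first exact: ltn_trans.
have : sorted ltn (map val (enum 'I_m)) by rewrite val_enum_ord iota_ltn_sorted.
by rewrite sorted_map.
Qed.

Lemma has_incr_subseqP k m (s : 'S_m) :
  reflect (exists2 S : {set 'I_m}, k <= #|S| & {in S &, forall x y, ~~ inversion s x y})
          (has_incr_subseq k s).
Proof.
apply: (iffP existsP) => [[f /forallP incr_f] | [S le_kS noinv_S]].
  have incr (i j : 'I_k) : i < j -> (f i < f j) && (s (f i) < s (f j)).
    by move=> lt_ij; move/forallP/(_ j): (incr_f i); rewrite lt_ij.
  have inj_f : injective f.
    by move=> i j eq_f; apply: val_inj; case: (ltngtP i j) => // /incr; rewrite eq_f ltnn.
  exists (f @: 'I_k); first by rewrite card_imset // card_ord.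
  move=> _ _ /imsetP[i _ ->] /imsetP[j _ ->]; rewrite /inversion.
  by case: (ltngtP i j) => [/incr/andP[] | /incr/andP[] | /val_inj ->]; lia.
have le_km : k <= m by rewrite (leq_trans le_kS) // (leq_trans (max_card _)) ?card_ord.
exists [ffun i : 'I_k => nth (widen_ord le_km i) (enum S) i].
apply/forallP => i; apply/forallP => j; apply/implyP => lt_ij; rewrite !ffunE.
have lt_S (l : 'I_k) : l < size (enum S) by rewrite -cardE (leq_trans (ltn_ord l)).
rewrite (set_nth_default (widen_ord le_km i) _ (lt_S j)).
have lt_trans : transitive (fun x y : 'I_m => x < y) by move=> y x z; exact: ltn_trans.
have lt_nth := sorted_ltn_nth lt_trans (widen_ord le_km i) (sorted_enum_ord_set S)
  _ _ (lt_S i) (lt_S j) lt_ij.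
by rewrite lt_nth noinversion_ltn ?noinv_S // -mem_enum mem_nth.
Qed.

Definition block_swap_nat m a c d i : nat :=
  if a + c + d <= m then
    if i < a then i else if i < a + c then i + d else if i < a + c + d then i - c else i
  else i.

Ltac block_swap_cases := rewrite /block_swap_nat; repeat case: ifP; lia.

Lemma block_swap_nat_ltn m a c d (i : 'I_m) : block_swap_nat m a c d i < m.
Proof. by have := ltn_ord i; block_swap_cases. Qed.

Lemma block_swap_natK m a c d i : block_swap_nat m a d c (block_swap_nat m a c d i) = i.
Proof. by block_swap_cases. Qed.

Definition block_swap_fun m a c d (i : 'I_m) : 'I_m := Ordinal (block_swap_nat_ltn a c d i).

Lemma block_swap_funK m a c d : cancel (@block_swap_fun m a c d) (block_swap_fun a d c).
Proof. by move=> i; apply: val_inj; exact: block_swap_natK. Qed.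

Definition block_swap m a c d : 'S_m := perm (can_inj (@block_swap_funK m a c d)).

Lemma block_swapE m a c d i : val (block_swap m a c d i) = block_swap_nat m a c d i.
Proof. by rewrite permE. Qed.

Lemma block_swapV m a c d : (block_swap m a c d)^-1%g = block_swap m a d c.
Proof.
apply/permP => i; apply: (@perm_inj _ (block_swap m a c d)); rewrite permKV.
by apply: val_inj; rewrite !block_swapE block_swap_natK.
Qed.

Lemma block_swap0 m a : block_swap m a 0 0 = 1%g.
Proof. by apply/permP => i; apply: val_inj; rewrite block_swapE perm1 /=; block_swap_cases. Qed.

Lemma inversion_block_swap m a c d (i j : 'I_m) : a + c + d <= m ->
  inversion (block_swap m a c d) i j = (a <= i < a + c) && (a + c <= j < a + c + d).
Proof. by move=> le_m; rewrite /inversion !block_swapE; have := ltn_ord j; block_swap_cases. Qed.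

Lemma block_swap_grassmannian m a c d : a + c + d <= m -> grassmannian (block_swap m a c d).
Proof.
move=> le_m; apply/card_le1_eqP => x y; rewrite !inE.
move=> /existsP[x' /andP[/eqP def_x' lt_x]] /existsP[y' /andP[/eqP def_y' lt_y]].
have := inversion_block_swap x x' le_m; have := inversion_block_swap y y' le_m.
rewrite /inversion /= in def_x' def_y' *; rewrite def_x' def_y' !ltnSn lt_x lt_y /=.
by move=> inv_y inv_x; apply: val_inj => /=; lia.
Qed.

Lemma block_swap_biGrassmannian m a c d : a + c + d <= m -> biGrassmannian (block_swap m a c d).
Proof.
move=> le_m; rewrite /biGrassmannian block_swapV !block_swap_grassmannian //; lia.
Qed.

Lemma block_swap_inj m a c d a' c' d' : 0 < c -> 0 < d -> 0 < c' -> 0 < d' ->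
  a + c + d <= m -> a' + c' + d' <= m ->
  block_swap m a c d = block_swap m a' c' d' -> [/\ a = a', c = c' & d = d'].
Proof.
move=> c_gt0 d_gt0 c'_gt0 d'_gt0 le_m le'_m eq_swap.
have inv_eq i j (lt_im : i < m) (lt_jm : j < m) :
  (a <= i < a + c) && (a + c <= j < a + c + d)
  = (a' <= i < a' + c') && (a' + c' <= j < a' + c' + d').
  by rewrite -(inversion_block_swap (Ordinal lt_im) (Ordinal lt_jm) le_m) eq_swap
             inversion_block_swap.
have := inv_eq a (a + c) ltac:(lia) ltac:(lia).
have := inv_eq a' (a' + c') ltac:(lia) ltac:(lia).
have := inv_eq a (a + c + d - 1) ltac:(lia) ltac:(lia).
have := inv_eq a' (a' + c' + d' - 1) ltac:(lia) ltac:(lia).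
by split; lia.
Qed.

Lemma avoids_id_block_swap k m a c d : k <= m -> a + c + d <= m ->
  avoids_id k (block_swap m a c d) = (m - k < c) && (m - k < d).
Proof.
move=> le_km le_m.
pose C := [set x : 'I_m | a <= x < a + c]; pose D := [set x : 'I_m | a + c <= x < a + c + d].
have card_C : #|~: C| = m - c by have := cardsC C; rewrite card_ord card_ord_interval; lia.
have card_D : #|~: D| = m - d by have := cardsC D; rewrite card_ord card_ord_interval; lia.
apply/negP/andP => [avoid | [lt_c lt_d] /has_incr_subseqP[S le_kS noinv_S]].
- have incr_in S : {in ~: S &, forall x y, ~~ inversion (block_swap m a c d) x y} ->
     k <= #|~: S| -> False.
    by move=> noinv le_kS; apply: avoid; apply/has_incr_subseqP; exists (~: S).
  split; rewrite ltnNge; apply/negP => le_m_k.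
  + apply: (incr_in C); last by rewrite card_C; lia.
    by move=> x y; rewrite !inE inversion_block_swap //; lia.
  + apply: (incr_in D); last by rewrite card_D; lia.
    by move=> x y; rewrite !inE inversion_block_swap //; lia.
- suff : (S \subset ~: C) || (S \subset ~: D).
    by case/orP => /subset_leq_card; rewrite ?card_C ?card_D; lia.
  apply/negPn/negP => /norP[/subsetPn[x Sx Cx] /subsetPn[y Sy Dy]].
  rewrite !inE !negbK in Cx Dy.
  by move: (noinv_S x y Sx Sy); rewrite inversion_block_swap // Cx Dy.
Qed.

Section BiGrassmannianShape.

Variables (m : nat) (s : 'S_m) (p v : 'I_m).
Hypotheses (desc_s : descents s = [set p]) (desc_sV : descents s^-1 = [set v]).

Lemma inversion_biGrassmannian i j : inversion s i j = (i <= p < j) && (s j <= v < s i).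
Proof.
apply/idP/idP => [inv_ij | /andP[/andP[le_ip lt_pj] /andP[le_jv lt_vi]]]; last first.
  by apply/andP; split; lia.
have inv_V : inversion s^-1 (s j) (s i).
  by move: inv_ij; rewrite /inversion !permK andbC.
have [l] := inversion_descent inv_ij; rewrite desc_s inE => /eqP-> ->.
by have [l'] := inversion_descent inv_V; rewrite desc_sV inE => /eqP-> ->.
Qed.

Lemma le_perm_same_side (x y : 'I_m) : x <= y -> (y <= p) || (p < x) -> s x <= s y.
Proof.
move=> le_xy side; rewrite leqNgt; apply/negP => lt_yx.
have lt_xy : x < y.
  by rewrite ltn_neqAle le_xy andbT; apply/eqP => /val_inj eq_xy; rewrite eq_xy ltnn in lt_yx.
by move: (inversion_biGrassmannian x y); rewrite /inversion lt_xy lt_yx; lia.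
Qed.

Lemma biGrassmannian_block_swap_shape :
  exists a c d, a + c + d <= m /\ s = block_swap m a c d.
Proof.
pose L := [set i : 'I_m | (i <= p) && (s i <= v)].
pose R := [set j : 'I_m | (j <= p) || (s j <= v)].
have memL i : (i \in L) = (i < #|L|).
  rewrite {1}(@downclosed_ordE _ L) ?inE // => x y le_yx; rewrite !inE => /andP[le_xp le_xv].
  by rewrite (leq_trans le_yx le_xp) (leq_trans _ le_xv) // le_perm_same_side // le_xp.
have memR j : (j \in R) = (j < #|R|).
  rewrite {1}(@downclosed_ordE _ R) ?inE // => x y le_yx; rewrite !inE.
  case: (leqP y p) => //= lt_py /orP[le_xp | le_xv]; first lia.
  by rewrite (leq_trans _ le_xv) // le_perm_same_side // lt_py orbT.
have [q val_q inv_pq] : exists2 q : 'I_m, q = p.+1 :> nat & inversion s p q.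
  by apply: descent_inversion; rewrite desc_s set11.
move: inv_pq; rewrite inversion_biGrassmannian => /andP[_ /andP[le_qv lt_vp]].
have le_Lp : #|L| <= p by move: (memL p); rewrite inE leqnn /=; lia.
have lt_pR : p < #|R| by move: (memR q); rewrite inE le_qv orbT /=; lia.
have le_Rm : #|R| <= m by rewrite (leq_trans (max_card _)) ?card_ord.
exists #|L|, (p.+1 - #|L|), (#|R| - p.+1); split; first lia.
apply: perm_inversion_inj => i j; rewrite inversion_block_swap; last lia.
by rewrite inversion_biGrassmannian; move: (memL i) (memR j); rewrite !inE; lia.
Qed.

End BiGrassmannianShape.

Lemma biGrassmannian_block_swap m (s : 'S_m) :
  biGrassmannian s -> exists a c d, a + c + d <= m /\ s = block_swap m a c d.
Proof.
case/andP => grass_s grass_sV.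
have [-> | s_neq1] := eqVneq s 1%g; first by exists 0, 0, 0; rewrite block_swap0.
have [p desc_s] := grassmannian_descent grass_s s_neq1.
have [|v desc_sV] := grassmannian_descent grass_sV.
  by apply: contra s_neq1 => /eqP sV1; rewrite -[s]invgK sV1 invg1.
exact: biGrassmannian_block_swap_shape desc_s desc_sV.
Qed.

Lemma sum_binomial_shift n M r : M <= n.+1 ->
  \sum_(i < n.+1) 'C(M - i + r, r.+1) = 'C(M + r.+1, r.+2).
Proof.
elim: n M => [|n IHn] [|M] le_M;
  try by rewrite big1 ?bin_small // => i _; rewrite sub0n bin_small.
- by rewrite big_ord1 subn0 (_ : M = 0) ?binn //; lia.
rewrite big_ord_recl subn0 (eq_bigr (fun i : 'I_n.+1 => 'C(M - i + r, r.+1))); last first.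
  by move=> i _; rewrite /bump /=; congr binomial; lia.
by rewrite IHn // addSn !addnS binS addnC.
Qed.

Lemma card_triples_le n s :
  #|[set q : 'I_n.+1 * ('I_n.+1 * 'I_n.+1) | q.1 + q.2.1 + q.2.2 + s <= n]|
  = 'C(n.+1 - s + 2, 3).
Proof.
rewrite -sum1_card big_mkcond /=.
rewrite (eq_bigr (fun q : 'I_n.+1 * ('I_n.+1 * 'I_n.+1) =>
   nat_of_bool (q.1 + q.2.1 + q.2.2 + s <= n))); last first.
  by move=> q _; rewrite inE; case: (_ <= _).
rewrite -(pair_bigA _ (fun (a : 'I_n.+1) (xy : 'I_n.+1 * 'I_n.+1) =>
   nat_of_bool (a + xy.1 + xy.2 + s <= n))) /=.
under eq_bigr => a _.
  rewrite -(pair_bigA _ (fun x y : 'I_n.+1 => nat_of_bool (a + x + y + s <= n))) /=.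
  under eq_bigr => x _.
    rewrite (eq_bigr (fun y : 'I_n.+1 => nat_of_bool (0 <= y < (n.+1 - s - a) - x)));
      last by move=> y _; congr nat_of_bool; lia.
    rewrite sum_nat_interval (_ : minn _ _ - _ = 'C((n.+1 - s - a) - x + 0, 1)); last first.
      by rewrite bin1; lia.
  over.
  rewrite sum_binomial_shift; last lia.
over.
by rewrite sum_binomial_shift //; lia.
Qed.

Theorem theorem5p2 (k m : nat) :
  1 <= k -> k <= m -> m < 2 * k ->
  #|[set s : 'S_m | biGrassmannian s && avoids_id k s]| = 'C(2 * k - m + 1, 3).
Proof.
move=> k_gt0 le_km lt_m2k; pose t := m - k + 1.
pose swap_of (q : 'I_m.+1 * ('I_m.+1 * 'I_m.+1)) :=
  block_swap m q.1 (q.2.1 + t) (q.2.2 + t).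
pose T := [set q : 'I_m.+1 * ('I_m.+1 * 'I_m.+1) | q.1 + q.2.1 + q.2.2 + 2 * t <= m].
have -> : [set s | biGrassmannian s && avoids_id k s] = swap_of @: T.
  apply/setP => s; rewrite inE; apply/andP/imsetP => [[] | [q Tq ->]].
    move=> /biGrassmannian_block_swap[a [c [d [le_m ->]]]].
    rewrite avoids_id_block_swap // => /andP[lt_c lt_d].
    exists (inord a, (inord (c - t), inord (d - t))); rewrite ?inE /swap_of /= !inordK; try lia.
    by rewrite !subnK // /t addn1.
  move: Tq; rewrite inE /= => Tq.
  by rewrite block_swap_biGrassmannian ?avoids_id_block_swap //=; lia.
rewrite card_in_imset => [|[a [x y]] [a' [x' y']]]; last first.
  rewrite !inE /= => Tq Tq' eq_swap.
  have [/val_inj-> /addIn/val_inj-> /addIn/val_inj->] //:=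
    @block_swap_inj m a (x + t) (y + t) a' (x' + t) (y' + t)
      ltac:(lia) ltac:(lia) ltac:(lia) ltac:(lia) ltac:(lia) ltac:(lia) eq_swap.
by rewrite card_triples_le; congr binomial; lia.
Qed.
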